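(* Let $S$ be a completely $0$-simple semigroup with finitely many left ideals and finitely many right ideals. If every maximal subgroup of $S$ is defined by a finite complete rewriting system, then $S$ is also defined by a finite complete rewriting system.
   Context: A semigroup $S$ with zero is completely $0$-simple if it is $0$-simple (i.e. $S^2\neq\{0\}$ and its only ideals are $\{0\}$ and $S$) and has $0$-minimal left and right ideals. A rewriting system $\langle X\mid R\rangle$ consists of an alphabet $X$ and rules $u\to v$ with $u,v\in X^+$; it is finite if $X,R$ are finite. One-step reduction: $w_1uw_2\to_R w_1vw_2$ for $(u\to v)\in R$; $\to_R^*$ is its reflexive transitive closure. It is noetherian if there is no infinite chain $w_1\to_R w_2\to_R\cdots$, confluent if $u\to_R^*v$, $u\to_R^*v'$ imply a common $w$ with $v\to_R^*w$, $v'\to_R^*w$, and complete if both. A semigroup (or group) is defined by $\langle X\mid R\rangle$ if it is isomorphic to $X^+$ modulo the congruence generated by $R$. *)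

From mathcomp Require Import all_boot.
From Stdlib Require Import Relations.
From Stdlib Require List.
Set Implicit Arguments. Unset Strict Implicit. Unset Printing Implicit Defensive.

Definition associative_op {S : Type} (mul : S -> S -> S) :=
  forall x y w, mul x (mul y w) = mul (mul x y) w.

Definition is_zero {S : Type} (mul : S -> S -> S) (z : S) :=
  forall x, mul z x = z /\ mul x z = z.

Definition set_eq {S : Type} (A B : S -> Prop) := forall x, A x <-> B x.
Definition set_sub {S : Type} (A B : S -> Prop) := forall x, A x -> B x.

Definition is_left_ideal {S : Type} (mul : S -> S -> S) (L : S -> Prop) :=
  (exists x, L x) /\ forall s x, L x -> L (mul s x).
Definition is_right_ideal {S : Type} (mul : S -> S -> S) (R : S -> Prop) :=
  (exists x, R x) /\ forall s x, R x -> R (mul x s).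
Definition is_ideal {S : Type} (mul : S -> S -> S) (I : S -> Prop) :=
  is_left_ideal mul I /\ is_right_ideal mul I.

Definition zero_set {S : Type} (z : S) : S -> Prop := fun x => x = z.
Definition full_set {S : Type} : S -> Prop := fun _ => True.

Definition zero_simple {S : Type} (mul : S -> S -> S) (z : S) :=
  (exists x y, mul x y <> z) /\
  forall I, is_ideal mul I -> set_eq I (zero_set z) \/ set_eq I full_set.

Definition zero_minimal_left_ideal {S : Type} (mul : S -> S -> S) (z : S) L :=
  is_left_ideal mul L /\ ~ set_eq L (zero_set z) /\
  forall L', is_left_ideal mul L' -> set_sub L' L ->
    set_eq L' (zero_set z) \/ set_eq L' L.
Definition zero_minimal_right_ideal {S : Type} (mul : S -> S -> S) (z : S) R :=
  is_right_ideal mul R /\ ~ set_eq R (zero_set z) /\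
  forall R', is_right_ideal mul R' -> set_sub R' R ->
    set_eq R' (zero_set z) \/ set_eq R' R.

Definition completely_zero_simple {S : Type} (mul : S -> S -> S) (z : S) :=
  zero_simple mul z /\
  (exists L, zero_minimal_left_ideal mul z L) /\
  (exists R, zero_minimal_right_ideal mul z R).

Definition finitely_many_left_ideals {S : Type} (mul : S -> S -> S) :=
  exists Ls : list (S -> Prop),
    forall L, is_left_ideal mul L -> exists L', List.In L' Ls /\ set_eq L L'.
Definition finitely_many_right_ideals {S : Type} (mul : S -> S -> S) :=
  exists Rs : list (S -> Prop),
    forall R, is_right_ideal mul R -> exists R', List.In R' Rs /\ set_eq R R'.

Definition is_subgroup {S : Type} (mul : S -> S -> S) (H : S -> Prop) :=
  exists e, H e /\
    (forall x y, H x -> H y -> H (mul x y)) /\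
    (forall x, H x -> mul e x = x /\ mul x e = x) /\
    (forall x, H x -> exists y, H y /\ mul x y = e /\ mul y x = e).

Definition is_maximal_subgroup {S : Type} (mul : S -> S -> S) (H : S -> Prop) :=
  is_subgroup mul H /\
  forall K, is_subgroup mul K -> set_sub H K -> set_sub K H.

Definition rules (X : finType) := seq (seq X * seq X).

Definition rules_ok (X : finType) (R : rules X) :=
  forall r, r \in R -> (0 < size r.1) && (0 < size r.2).

Definition rstep (X : finType) (R : rules X) (a b : seq X) :=
  exists w1 w2 u v, (u, v) \in R /\ a = w1 ++ u ++ w2 /\ b = w1 ++ v ++ w2.

Definition rsteps (X : finType) (R : rules X) := clos_refl_trans _ (rstep R).

Definition noetherian (X : finType) (R : rules X) :=
  ~ exists f : nat -> seq X, forall n, rstep R (f n) (f n.+1).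

Definition confluent (X : finType) (R : rules X) :=
  forall u v v', rsteps R u v -> rsteps R u v' ->
    exists w, rsteps R v w /\ rsteps R v' w.

Definition complete (X : finType) (R : rules X) := noetherian R /\ confluent R.

Definition rcong (X : finType) (R : rules X) := clos_refl_sym_trans _ (rstep R).

Definition eval_word {S : Type} (mul : S -> S -> S) (X : Type) (f : X -> S)
  (x : X) (w : seq X) : S := foldl (fun a y => mul a (f y)) (f x) w.

(* The subsemigroup H of S (given as a subset, H = full_set for S itself)
   is defined by <X | R>: the homomorphism X^+ -> S induced by f maps onto H
   and its kernel is exactly the congruence generated by R, i.e. H is
   isomorphic to X^+ / R^#. *)
Definition defined_by {S : Type} (mul : S -> S -> S) (H : S -> Prop)
  (X : finType) (R : rules X) :=
  exists f : X -> S,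
    (forall x w, H (eval_word mul f x w)) /\
    (forall s, H s -> exists x w, eval_word mul f x w = s) /\
    (forall x w y w', eval_word mul f x w = eval_word mul f y w' <->
                      rcong R (x :: w) (y :: w')).

Definition fcrs_defined {S : Type} (mul : S -> S -> S) (H : S -> Prop) :=
  exists (X : finType) (R : rules X),
    rules_ok R /\ complete R /\ defined_by mul H R.

From mathcomp Require Import all_boot.
From Stdlib Require Import Relations Classical ClassicalEpsilon.
From mathcomp Require Import zify.
From Stdlib Require Import Lia.
Set Implicit Arguments. Unset Strict Implicit. Unset Printing Implicit Defensive.

(* Fix a nonzero idempotent [e], so that [H_e = eSe \ {0}] is a maximal subgroup,
   presented by a finite complete system over an alphabet [A], and pick
   representatives [r_i] of the other R-classes inside the L-class of [e] and [q_l]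
   of the other L-classes inside its R-class (Rees).  Every nonzero element is
   uniquely [r g q] with [g] in [H_e] and [r], [q] optional.  Over the letters
   [A + {r_i} + {q_l} + {0}] the group rules, the absorption rules for [0], the rules
   [r_i w_e -> r_i] and [w_e q_l -> q_l] ([w_e] the normal form of [e]), and the rules
   rewriting the products [a r_i], [r_j r_i], [q_l r_i], [q_l a], [q_l q_m] through
   words for elements of [eSe = H_e + {0}] form the system.
   Irreducible words are exactly [0] and [r? u q?] with [u] a group normal form;
   uniqueness of the Rees decomposition makes them pairwise distinct in value, which
   gives confluence.  Each non-group rule either lowers the number of [r]/[q]
   letters or erases an [r]/[q]-free factor next to a non-group letter, and such
   erasures can be postponed past group steps, which gives termination. *)

(** * Abstract rewriting *)

Section AbstractRewriting.
Variables (T : Type) (R : relation T).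

Definition irreducible (x : T) := forall y, ~ R x y.

Lemma wf_no_infinite_chain :
  well_founded (transp T R) -> ~ exists f : nat -> T, forall n, R (f n) (f n.+1).
Proof.
move=> wfR [f Rf].
suff no_chain x : Acc (transp T R) x ->
    forall g : nat -> T, g 0 = x -> ~ forall n, R (g n) (g n.+1).
  exact: no_chain (wfR (f 0)) f erefl Rf.
elim=> {}x _ IH g g0 Rg.
by apply: (IH (g 1) _ (fun n => g n.+1)) => //; rewrite -g0; exact: Rg.
Qed.

Lemma no_infinite_chain_wf :
  (~ exists f : nat -> T, forall n, R (f n) (f n.+1)) -> well_founded (transp T R).
Proof.
move=> no_chain x; apply: NNPP => notAcc_x; apply: no_chain.
pose P y := ~ Acc (transp T R) y.
have step y : P y -> exists y', R y y' /\ P y'.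
  move=> Py; apply: NNPP => none; apply: Py; constructor=> y' Ryy'.
  by apply: NNPP => Py'; apply: none; exists y'.
pose next y := epsilon (inhabits y) (fun y' => R y y' /\ P y').
have next_spec y : P y -> R y (next y) /\ P (next y).
  by move=> Py; exact: epsilon_spec (step y Py).
have P_iter n : P (iter n next x) by elim: n => // n IH; exact: (next_spec _ IH).2.
by exists (fun n => iter n next x) => n; exact: (next_spec _ (P_iter n)).1.
Qed.

Lemma Acc_normal_form x :
  Acc (transp T R) x -> exists y, clos_refl_trans T R x y /\ irreducible y.
Proof.
elim=> {}x _ IH; case: (classic (exists y, R x y)) => [[y Rxy]|irr_x].
  have [w [yw irr_w]] := IH y Rxy.
  by exists w; split=> //; exact: rt_trans (rt_step _ _ _ _ Rxy) yw.
by exists x; split; [exact: rt_refl | move=> y Rxy; apply: irr_x; exists y].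
Qed.

Lemma irreducible_rt_eq x y : irreducible x -> clos_refl_trans T R x y -> y = x.
Proof. by move=> irr_x /clos_rt_rt1n_iff [//|y' z' /irr_x]. Qed.

Lemma church_rosser :
  (forall u v v', clos_refl_trans T R u v -> clos_refl_trans T R u v' ->
     exists w, clos_refl_trans T R v w /\ clos_refl_trans T R v' w) ->
  forall a b, clos_refl_sym_trans T R a b ->
    exists c, clos_refl_trans T R a c /\ clos_refl_trans T R b c.
Proof.
move=> confl a b; elim=> {a b} [a b Rab|a|a b _ [c [ac bc]]|a b c _ [d [ad bd]] _ [d' [bd' cd']]].
- by exists b; split; [exact: rt_step | exact: rt_refl].
- by exists a; split; exact: rt_refl.
- by exists c.
- have [w [dw d'w]] := confl _ _ _ bd bd'.
  by exists w; split; [exact: rt_trans ad dw | exact: rt_trans cd' d'w].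
Qed.

End AbstractRewriting.

Section Termination.
Variable T : Type.

Lemma wf_measure_lex (P Q : relation T) (f : T -> nat) :
  well_founded (transp T P) ->
  (forall x y, Q x y -> f y < f x \/ P x y /\ f y <= f x) ->
  well_founded (transp T Q).
Proof.
move=> wfP step; suff below k x : f x < k -> Acc (transp T Q) x.
  by move=> x; exact: below (f x).+1 _ _.
elim: k x => [x|k IHk x]; first by rewrite ltn0.
rewrite ltnS; elim: (wfP x) => {}x _ IHx fxk.
constructor=> y /step [fyx|[Pxy fyx]].
- by apply: IHk; exact: leq_trans fyx fxk.
- by apply: IHx Pxy _; exact: leq_trans fyx fxk.
Qed.

Lemma wf_measure (R : relation T) (f : T -> nat) :
  (forall x y, R x y -> f y < f x) -> well_founded (transp T R).
Proof.
move=> decr; apply: (@wf_measure_lex (fun _ _ => False) R f) => [x|x y /decr]; last by left.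
by constructor.
Qed.

(* Bachmair-Dershowitz: [D]-steps can be postponed past [R]-steps, so an
   infinite [R \/ D] chain would yield an infinite [R]- or [D]-chain. *)
Lemma wf_union_postpone (R D : relation T) :
  well_founded (transp T R) -> well_founded (transp T D) ->
  (forall a b c, D a b -> R b c -> exists2 a', R a a' & clos_refl_trans T D a' c) ->
  well_founded (transp T (union T R D)).
Proof.
move=> wfR wfD postpone.
have postpone_rt s t t' : clos_refl_trans T D s t -> R t t' ->
    exists2 s', R s s' & clos_refl_trans T D s' t'.
  move=> /clos_rt_rtn1_iff st; elim: st t' => [|y u Dyu _ IH] t' Rut'.
    by exists t'; [|exact: rt_refl].
  have [y' Ryy' y't'] := postpone _ _ _ Dyu Rut'.
  have [s' Rss' s'y'] := IH _ Ryy'.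
  by exists s'; [|exact: rt_trans s'y' y't'].
suff below s : Acc (transp T R) s ->
    forall t, clos_refl_trans T D s t -> Acc (transp T (union T R D)) t.
  by move=> x; exact: below (wfR x) x (rt_refl _ _ x).
elim=> {}s _ IHs t st; move: st; elim: (wfD t) => {}t _ IHt st.
constructor=> t' [Rtt'|Dtt'].
- by have [s' Rss' s't'] := postpone_rt _ _ _ st Rtt'; exact: IHs Rss' _ s't'.
- by apply: (IHt _ Dtt'); exact: rt_trans st (rt_step _ _ _ _ Dtt').
Qed.

End Termination.

Section WordEvaluation.
Variables (S : Type) (mul : S -> S -> S).
Hypothesis mulA : associative_op mul.
Variables (T : Type) (f : T -> S).

(* The empty word evaluates to [None], which [omul] treats as an identity. *)
Definition oeval (w : seq T) : option S :=
  if w is x :: w' then Some (eval_word mul f x w') else None.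

Definition omul (a b : option S) : option S :=
  match a, b with
  | Some x, Some y => Some (mul x y)
  | None, _ => b
  | _, None => a
  end.

Lemma oeval_cat w1 w2 : oeval (w1 ++ w2) = omul (oeval w1) (oeval w2).
Proof.
have foldl_mul w a b : foldl (fun s y => mul s (f y)) (mul a b) w =
                       mul a (foldl (fun s y => mul s (f y)) b w).
  by elim: w b => //= y w IH b; rewrite -mulA IH.
case: w1 => [|x w1] //; case: w2 => [|y w2]; first by rewrite cats0.
by rewrite /= /eval_word foldl_cat /= foldl_mul.
Qed.

Lemma oeval_eq_None w : oeval w = None <-> w = [::].
Proof. by case: w. Qed.

Lemma oeval_congr w1 w2 u v :
  oeval u = oeval v -> oeval (w1 ++ u ++ w2) = oeval (w1 ++ v ++ w2).
Proof. by rewrite !oeval_cat => ->. Qed.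

End WordEvaluation.

Lemma oeval_map (S : Type) (mul : S -> S -> S) (T U : Type) (f : T -> S) (g : U -> T) u :
  oeval mul f (map g u) = oeval mul (f \o g) u.
Proof.
by case: u => //= x u; congr Some; rewrite /eval_word /=; elim: u (f (g x)) => //= y u IH a.
Qed.

Definition asbool (P : Prop) : bool := if excluded_middle_informative P then true else false.

Lemma asboolP (P : Prop) : reflect P (asbool P).
Proof. by rewrite /asbool; case: excluded_middle_informative => h; constructor. Qed.

(* Classes are indexed by the first position of their representative in [Ks];
   taking the first one is what makes the representatives pairwise inequivalent. *)
Lemma finite_transversal (T U : Type) (cls : T -> U -> Prop) (P : T -> Prop)
    (Ks : list (U -> Prop)) :
  (forall x, P x -> exists K, List.In K Ks /\ set_eq (cls x) K) ->
  exists (I : finType) (r : I -> T),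
    [/\ forall i, P (r i),
        forall i j, set_eq (cls (r i)) (cls (r j)) -> i = j &
        forall x, P x -> exists i, set_eq (cls (r i)) (cls x)].
Proof.
move=> covered; pose K k := List.nth k Ks (fun _ => False).
pose first_index x k := set_eq (cls x) (K k) /\ forall k', k' < k -> ~ set_eq (cls x) (K k').
have first_index_uniq x y k k' : set_eq (cls x) (cls y) ->
    first_index x k -> first_index y k' -> k = k'.
  move=> xy [xk k_min] [yk' k'_min]; case: (ltngtP k k') => // [lt_kk'|lt_k'k].
  - by case: (k'_min k lt_kk') => u; rewrite -xk xy.
  - by case: (k_min k' lt_k'k) => u; rewrite -yk' xy.
have first_index_ex x : P x -> exists2 k, k < List.length Ks & first_index x k.
  move=> /covered [Kx [Kx_in xKx]].
  have [k0 [/ltP k0_lt Kk0]] := List.In_nth _ _ (fun _ => False) Kx_in.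
  have ex_k : exists k, asbool (set_eq (cls x) (K k)).
    by exists k0; apply/asboolP; rewrite /K Kk0.
  case: (ex_minnP ex_k) => k /asboolP xk k_min; exists k.
    by apply: leq_ltn_trans k0_lt; apply: k_min; apply/asboolP; rewrite /K Kk0.
  split=> // k' lt_k'k xk'; have := k_min k' (introT (asboolP _) xk').
  by rewrite leqNgt lt_k'k.
pose I := {k : 'I_(List.length Ks) | asbool (exists x, P x /\ first_index x k)}.
have /fin_all_exists [r r_spec] (i : I) : exists x, P x /\ first_index x (val (val i)).
  exact/asboolP/(valP i).
exists I, r; split=> [i|i j ij|x Px]; first by case: (r_spec i).
  apply/val_inj/val_inj; have [_ ri] := r_spec i; have [_ rj] := r_spec j.
  exact: first_index_uniq ij ri rj.
have [k k_lt xk] := first_index_ex x Px.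
have Ik : asbool (exists x, P x /\ first_index x (Ordinal k_lt)) by apply/asboolP; exists x.
exists (exist _ (Ordinal k_lt) Ik); have [_ [rk _]] := r_spec (exist _ (Ordinal k_lt) Ik).
by move=> u; rewrite rk /= -(proj1 xk).
Qed.

(** * Completely 0-simple semigroups *)

Definition opp_op (S : Type) (mul : S -> S -> S) : S -> S -> S := fun x y => mul y x.
Definition Smul (S : Type) (mul : S -> S -> S) (s : S) : S -> Prop :=
  fun x => exists t, x = mul t s.
Definition mulS (S : Type) (mul : S -> S -> S) (s : S) : S -> Prop :=
  fun x => exists t, x = mul s t.

Section ZeroSimple.
Variables (S : Type) (mul : S -> S -> S) (z : S).
Hypotheses (mulA : associative_op mul) (Hzero : is_zero mul z).
Hypothesis Hsimple : zero_simple mul z.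
Local Infix "⋆" := mul (at level 40, left associativity).
Let mulz x : z ⋆ x = z. Proof. exact: (Hzero x).1. Qed.
Let mul_z x : x ⋆ z = z. Proof. exact: (Hzero x).2. Qed.

Lemma nonzero_ideal_full I a : is_ideal mul I -> I a -> a <> z -> forall x, I x.
Proof.
move=> /Hsimple.2 [I_z|I_full] Ia a_nz x; last exact/I_full.
by case: a_nz; apply/I_z.
Qed.

Lemma exists_factorization x : exists a b, x = a ⋆ b.
Proof.
have [[a [b ab_nz]] _] := Hsimple.
apply: (@nonzero_ideal_full (fun x => exists a b, x = a ⋆ b) (a ⋆ b)) => //;
  last by exists a, b.
by split; (split; first by exists (a ⋆ b), a, b) => s _ [c [d ->]];
  [exists (s ⋆ c), d | exists c, (d ⋆ s)]; rewrite mulA.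
Qed.

Lemma in_S1aS1 a : a <> z -> forall x,
  x = a \/ (exists t, x = t ⋆ a) \/ (exists u, x = a ⋆ u) \/ (exists t u, x = t ⋆ a ⋆ u).
Proof.
move=> a_nz; apply: nonzero_ideal_full a_nz; last by left.
split; (split; first by exists a; left) => s y [->|[[t ->]|[[u ->]|[t [u ->]]]]].
- by right; left; exists s.
- by right; left; exists (s ⋆ t); rewrite mulA.
- by do 3 right; exists s, u; rewrite mulA.
- by do 3 right; exists (s ⋆ t), u; rewrite !mulA.
- by right; right; left; exists s.
- by do 3 right; exists t, s.
- by right; right; left; exists (u ⋆ s); rewrite mulA.
- by do 3 right; exists t, (u ⋆ s); rewrite !mulA.
Qed.

Lemma in_SaS a : a <> z -> forall x, exists t u, x = t ⋆ a ⋆ u.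
Proof.
move=> a_nz x; have [x1 [y ->]] := exists_factorization x.
have [x2 [x3 ->]] := exists_factorization y.
case: (in_S1aS1 a_nz x2) => [->|[[t ->]|[[u ->]|[t [u ->]]]]].
- by exists x1, x3; rewrite mulA.
- by exists (x1 ⋆ t), x3; rewrite !mulA.
- by exists x1, (u ⋆ x3); rewrite !mulA.
- by exists (x1 ⋆ t), (u ⋆ x3); rewrite !mulA.
Qed.

Lemma aSb_nonzero a b : a <> z -> b <> z -> exists t, a ⋆ t ⋆ b <> z.
Proof.
move=> a_nz b_nz; apply: NNPP => aSb_z.
have [[x [y xy_nz]] _] := Hsimple; apply: xy_nz.
have [t1 [u1 ->]] := in_SaS a_nz x; have [t2 [u2 ->]] := in_SaS b_nz y.
have -> : t1 ⋆ a ⋆ u1 ⋆ (t2 ⋆ b ⋆ u2) = t1 ⋆ (a ⋆ (u1 ⋆ t2) ⋆ b) ⋆ u2.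
  by rewrite !mulA.
have -> : a ⋆ (u1 ⋆ t2) ⋆ b = z by apply: NNPP => nz; apply: aSb_z; exists (u1 ⋆ t2).
by rewrite mul_z mulz.
Qed.

Variable L0 : S -> Prop.
Hypothesis HL0 : zero_minimal_left_ideal mul z L0.

Lemma L0_nonzero : exists l, L0 l /\ l <> z.
Proof.
have [[[x Lx] L0_closed] [L0_nz _]] := HL0.
apply: NNPP => all_z; apply: L0_nz => y; split=> [Ly|->].
  by apply: NNPP => y_nz; apply: all_z; exists y.
by rewrite -(mulz x); exact: L0_closed.
Qed.

Lemma L0_sub_Smul l : L0 l -> l <> z -> set_sub L0 (Smul mul l).
Proof.
move=> Ll l_nz; have [[_ L0_closed] [_ L0_min]] := HL0.
have Sl_ideal : is_left_ideal mul (Smul mul l).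
  by split; [exists (l ⋆ l), l | move=> s _ [t ->]; exists (s ⋆ t); rewrite mulA].
have Sl_sub : set_sub (Smul mul l) L0 by move=> _ [t ->]; exact: L0_closed.
have [Sl_z|Sl_L0] := L0_min _ Sl_ideal Sl_sub.
  have [t ltl_nz] := aSb_nonzero l_nz l_nz; case: ltl_nz; apply/Sl_z; by exists (l ⋆ t).
by move=> y /Sl_L0.
Qed.

Lemma nonzero_factor_L0 a : a <> z ->
  exists l, L0 l /\ l <> z /\ (a = l \/ exists u, a = l ⋆ u).
Proof.
move=> a_nz; have [l1 [Ll1 l1_nz]] := L0_nonzero; have [[_ L0_closed] _] := HL0.
case: (in_S1aS1 l1_nz a) => [a_def|[[t a_def]|[[u a_def]|[t [u a_def]]]]]; subst a.
- by exists l1; do 2 split => //; left.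
- by exists (t ⋆ l1); split; [exact: L0_closed | split=> //; left].
- by exists l1; do 2 split => //; right; exists u.
- exists (t ⋆ l1); split; first exact: L0_closed.
  by split; [move=> tl_z; apply: a_nz; rewrite tl_z mulz | right; exists u].
Qed.

Lemma Smul_nonzero_sym a b : a <> z -> b <> z -> Smul mul a b -> Smul mul b a.
Proof.
move=> a_nz b_nz [t b_def]; have [[_ L0_closed] _] := HL0.
have [l [Ll [l_nz [a_l|[u a_lu]]]]] := nonzero_factor_L0 a_nz.
  subst a; have Lb : L0 b by rewrite b_def; exact: L0_closed.
  exact: L0_sub_Smul Lb b_nz l Ll.
have tl_nz : t ⋆ l <> z by move=> tl_z; apply: b_nz; rewrite b_def a_lu mulA tl_z mulz.
have [v l_def] := L0_sub_Smul (L0_closed t l Ll) tl_nz Ll.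
by exists v; rewrite b_def a_lu {1}l_def !mulA.
Qed.

Lemma Smul_nonzero_refl a : a <> z -> Smul mul a a.
Proof.
move=> a_nz; have [t ata_nz] := aSb_nonzero a_nz a_nz.
have [v a_def] := Smul_nonzero_sym a_nz ata_nz (ex_intro _ (a ⋆ t) erefl).
by exists (v ⋆ a ⋆ t); rewrite {1}a_def !mulA.
Qed.

Lemma Smul_nonzero_eq a b : a <> z -> b <> z -> Smul mul a b -> set_eq (Smul mul a) (Smul mul b).
Proof.
move=> a_nz b_nz ab; have [v a_def] := Smul_nonzero_sym a_nz b_nz ab; case: ab => t b_def.
move=> x; split=> -[u ->].
- by exists (u ⋆ v); rewrite {1}a_def mulA.
- by exists (u ⋆ t); rewrite b_def mulA.
Qed.

End ZeroSimple.

Section Opposite.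
Variables (S : Type) (mul : S -> S -> S) (z : S).

Lemma associative_op_opp : associative_op mul -> associative_op (opp_op mul).
Proof. by move=> mulA x y w; rewrite /opp_op mulA. Qed.

Lemma is_zero_opp : is_zero mul z -> is_zero (opp_op mul) z.
Proof. by move=> Hzero x; rewrite /opp_op; case: (Hzero x). Qed.

Lemma zero_simple_opp : zero_simple mul z -> zero_simple (opp_op mul) z.
Proof.
case=> [[x [y xy_nz]] ideals]; split; first by exists y, x.
by move=> I [I_left I_right]; exact: ideals (conj I_right I_left).
Qed.

Lemma completely_zero_simple_opp :
  completely_zero_simple mul z -> completely_zero_simple (opp_op mul) z.
Proof.
case=> simple [[L0 HL0] [R0 HR0]].
by split; [exact: zero_simple_opp | split; [exists R0 | exists L0]].
Qed.

End Opposite.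

Definition idem_group (S : Type) (mul : S -> S -> S) (z e : S) : S -> Prop :=
  fun g => g <> z /\ mul e g = g /\ mul g e = g.

(* Representatives of the nonzero R-classes ([mulS mul s] is [sS]) other than the
   class of [e], which is represented by [e] itself. *)
Definition R_transversal (S : Type) (mul : S -> S -> S) (z e : S) (I : Type) (r : I -> S) :=
  [/\ forall i, r i <> z /\ mul (r i) e = r i /\ ~ set_eq (mulS mul (r i)) (mulS mul e),
      forall i j, set_eq (mulS mul (r i)) (mulS mul (r j)) -> i = j &
      forall s, s <> z -> ~ set_eq (mulS mul s) (mulS mul e) ->
        exists i, set_eq (mulS mul (r i)) (mulS mul s)].

Definition L_transversal (S : Type) (mul : S -> S -> S) (z e : S) (L : Type) (q : L -> S) :=
  [/\ forall l, q l <> z /\ mul e (q l) = q l /\ ~ set_eq (Smul mul (q l)) (Smul mul e),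
      forall l m, set_eq (Smul mul (q l)) (Smul mul (q m)) -> l = m &
      forall s, s <> z -> ~ set_eq (Smul mul s) (Smul mul e) ->
        exists l, set_eq (Smul mul (q l)) (Smul mul s)].

Section CompletelyZeroSimple.
Variables (S : Type) (mul : S -> S -> S) (z : S).
Hypotheses (mulA : associative_op mul) (Hzero : is_zero mul z).
Hypothesis HS : completely_zero_simple mul z.
Local Infix "⋆" := mul (at level 40, left associativity).
Let mulz x : z ⋆ x = z. Proof. exact: (Hzero x).1. Qed.
Let mul_z x : x ⋆ z = z. Proof. exact: (Hzero x).2. Qed.
Let Hsimple : zero_simple mul z := proj1 HS.
Let Hsimple_opp : zero_simple (opp_op mul) z := zero_simple_opp Hsimple.
Let mulA_opp : associative_op (opp_op mul) := associative_op_opp mulA.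
Let Hzero_opp : is_zero (opp_op mul) z := is_zero_opp Hzero.

Lemma Smul_sym a b : a <> z -> b <> z -> Smul mul a b -> Smul mul b a.
Proof. by have [_ [[L0 HL0] _]] := HS; exact: (Smul_nonzero_sym mulA Hzero Hsimple HL0). Qed.

Lemma mulS_sym a b : a <> z -> b <> z -> mulS mul a b -> mulS mul b a.
Proof.
by have [_ [_ [R0 HR0]]] := HS; exact: (Smul_nonzero_sym mulA_opp Hzero_opp Hsimple_opp HR0).
Qed.

Lemma Smul_refl a : a <> z -> Smul mul a a.
Proof. by have [_ [[L0 HL0] _]] := HS; exact: (Smul_nonzero_refl mulA Hzero Hsimple HL0). Qed.

Lemma mulS_refl a : a <> z -> mulS mul a a.
Proof.
by have [_ [_ [R0 HR0]]] := HS; exact: (Smul_nonzero_refl mulA_opp Hzero_opp Hsimple_opp HR0).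
Qed.

Lemma Smul_eq a b : a <> z -> b <> z -> Smul mul a b -> set_eq (Smul mul a) (Smul mul b).
Proof. by have [_ [[L0 HL0] _]] := HS; exact: (Smul_nonzero_eq mulA Hzero Hsimple HL0). Qed.

Lemma mulS_eq a b : a <> z -> b <> z -> mulS mul a b -> set_eq (mulS mul a) (mulS mul b).
Proof.
by have [_ [_ [R0 HR0]]] := HS; exact: (Smul_nonzero_eq mulA_opp Hzero_opp Hsimple_opp HR0).
Qed.

Lemma mulS_right_ideal s : is_right_ideal mul (mulS mul s).
Proof. by split; [exists (s ⋆ s), s | move=> t _ [u ->]; exists (u ⋆ t); rewrite mulA]. Qed.

Lemma exists_idempotent : exists e, e ⋆ e = e /\ e <> z.
Proof.
have [[a [b ab_nz]] _] := Hsimple.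
have a_nz : a <> z by move=> a_z; apply: ab_nz; rewrite a_z mulz.
have [t ata_nz] := aSb_nonzero mulA Hzero Hsimple a_nz a_nz.
pose x := a ⋆ t.
have [y a_def] := Smul_sym a_nz ata_nz (ex_intro _ x erefl).
have x_yxx : x = y ⋆ (x ⋆ x) by rewrite /x {1}a_def !mulA.
have xx_nz : x ⋆ x <> z.
  by move=> xx_z; apply: ata_nz; rewrite -/x x_yxx xx_z mul_z mulz.
have x_nz : x <> z by move=> x_z; apply: xx_nz; rewrite x_z mulz.
have [v x_vxx] := Smul_sym x_nz xx_nz (ex_intro _ x erefl).
have [u x_xxu] := mulS_sym x_nz xx_nz (ex_intro _ x erefl).
have xu_vx : x ⋆ u = v ⋆ x by rewrite {1}x_vxx -(mulA v) -x_xxu.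
have xux : x ⋆ u ⋆ x = x by rewrite xu_vx -mulA -x_vxx.
exists (x ⋆ u); split; first by rewrite mulA xux.
by move=> xu_z; apply: x_nz; rewrite -xux xu_z mulz.
Qed.

Section AtIdempotent.
Variable e : S.
Hypotheses (ee : e ⋆ e = e) (e_nz : e <> z).
Local Notation He := (idem_group mul z e).

Lemma idem_group_mul g h : He g -> He h -> He (g ⋆ h).
Proof.
move=> [g_nz [eg ge]] [h_nz [eh he]]; split; last by rewrite mulA eg -mulA he.
have [v e_vg] := Smul_sym e_nz g_nz (ex_intro _ g (esym ge)).
by move=> gh_z; apply: h_nz; rewrite -eh e_vg -mulA gh_z mul_z.
Qed.

Lemma idem_group_inv g : He g -> exists h, He h /\ g ⋆ h = e /\ h ⋆ g = e.
Proof.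
move=> Hg; have [g_nz [eg ge]] := Hg.
have [v e_vg] := Smul_sym e_nz g_nz (ex_intro _ g (esym ge)).
have [w e_gw] := mulS_sym e_nz g_nz (ex_intro _ g (esym eg)).
have l_inv : e ⋆ v ⋆ e ⋆ g = e by rewrite -(mulA _ e) eg -mulA -e_vg ee.
have r_inv : g ⋆ (e ⋆ w ⋆ e) = e by rewrite !mulA ge -e_gw ee.
have inv_eq : e ⋆ v ⋆ e = e ⋆ w ⋆ e.
  have -> : e ⋆ v ⋆ e = e ⋆ v ⋆ e ⋆ (g ⋆ (e ⋆ w ⋆ e)).
    by rewrite r_inv -(mulA (e ⋆ v)) ee.
  by rewrite mulA l_inv !mulA ee.
exists (e ⋆ v ⋆ e); do 2 split => //; last by rewrite inv_eq.
- by move=> inv_z; apply: e_nz; rewrite -l_inv inv_z mulz.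
- by split; [rewrite !mulA ee | rewrite -mulA ee].
Qed.

Lemma idem_group_maximal : is_maximal_subgroup mul He.
Proof.
split.
  exists e; split; first by split=> //; rewrite ee.
  split; first exact: idem_group_mul.
  split; first by move=> x [_ []].
  by move=> x /idem_group_inv [h [Hh [xh hx]]]; exists h.
move=> K [e' [Ke' [_ [K_unit K_inv]]]] HeK.
have Ke : K e by apply: HeK; split=> //; rewrite ee.
have e'_e : e' = e.
  have [y [_ [ey ye]]] := K_inv e Ke.
  by rewrite -ey -{1}ee -mulA ey; case: (K_unit e Ke).
move=> x Kx; have [e'x xe'] := K_unit x Kx; rewrite e'_e in e'x xe'.
split=> // x_z; subst x; have [y [_ [zy _]]] := K_inv z Kx.
by apply: e_nz; rewrite -e'_e -zy mulz.
Qed.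

Lemma exists_R_transversal :
  finitely_many_right_ideals mul -> exists (I : finType) (r : I -> S), R_transversal mul z e r.
Proof.
case=> Rs HRs; pose P x := x <> z /\ x ⋆ e = x /\ ~ set_eq (mulS mul x) (mulS mul e).
have [I [r [Pr r_inj r_cover]]] :=
  @finite_transversal _ _ (mulS mul) P Rs (fun x _ => HRs _ (mulS_right_ideal x)).
exists I, r; split=> // s s_nz s_e.
have [t ste_nz] := aSb_nonzero mulA Hzero Hsimple s_nz e_nz.
have s_ste : set_eq (mulS mul s) (mulS mul (s ⋆ t ⋆ e)).
  by apply: mulS_eq => //; exists (t ⋆ e); rewrite mulA.
have [|i ri] := r_cover (s ⋆ t ⋆ e).
  by split=> //; split; [rewrite -mulA ee | move=> ste_e; apply: s_e => x; rewrite s_ste].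
by exists i => x; rewrite ri s_ste.
Qed.

Section ReesDecomposition.
Variables (I L : Type) (r : I -> S) (q : L -> S).
Hypotheses (Hr : R_transversal mul z e r) (Hq : L_transversal mul z e q).
Local Notation rep := (oapp r e).
Local Notation lrep := (oapp q e).

Lemma rep_spec oi : rep oi <> z /\ rep oi ⋆ e = rep oi.
Proof. by case: oi => [i|] //=; have [/(_ i) [ri_nz [ri_e _]] _ _] := Hr. Qed.

Lemma lrep_spec ol : lrep ol <> z /\ e ⋆ lrep ol = lrep ol.
Proof. by case: ol => [l|] //=; have [/(_ l) [ql_nz [eql _]] _ _] := Hq. Qed.

Lemma rep_linv oi : exists a, a ⋆ rep oi = e.
Proof.
have [r_nz re] := rep_spec oi.
by have [a e_ar] := Smul_sym e_nz r_nz (ex_intro _ (rep oi) (esym re)); exists a.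
Qed.

Lemma lrep_rinv ol : exists b, lrep ol ⋆ b = e.
Proof.
have [q_nz eq] := lrep_spec ol.
by have [b e_qb] := mulS_sym e_nz q_nz (ex_intro _ (lrep ol) (esym eq)); exists b.
Qed.

Lemma rep_class_inj oi oj : set_eq (mulS mul (rep oi)) (mulS mul (rep oj)) -> oi = oj.
Proof.
have [r_spec r_inj _] := Hr.
case: oi => [i|]; case: oj => [j|] //= ij; first by rewrite (r_inj i j ij).
- by case: (r_spec i) => _ [_ /(_ ij)].
- by case: (r_spec j) => _ [_ not_e]; case: not_e => x; rewrite ij.
Qed.

Lemma lrep_class_inj ol om : set_eq (Smul mul (lrep ol)) (Smul mul (lrep om)) -> ol = om.
Proof.
have [q_spec q_inj _] := Hq.
case: ol => [l|]; case: om => [m|] //= lm; first by rewrite (q_inj l m lm).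
- by case: (q_spec l) => _ [_ /(_ lm)].
- by case: (q_spec m) => _ [_ not_e]; case: not_e => x; rewrite lm.
Qed.

Lemma rep_class_cover s : s <> z -> exists oi, set_eq (mulS mul (rep oi)) (mulS mul s).
Proof.
move=> s_nz; case: (classic (set_eq (mulS mul s) (mulS mul e))) => [s_e|s_e].
  by exists None => x; rewrite s_e.
by have [_ _ /(_ s s_nz s_e) [i ri]] := Hr; exists (Some i).
Qed.

Lemma lrep_class_cover s : s <> z -> exists ol, set_eq (Smul mul (lrep ol)) (Smul mul s).
Proof.
move=> s_nz; case: (classic (set_eq (Smul mul s) (Smul mul e))) => [s_e|s_e].
  by exists None => x; rewrite s_e.
by have [_ _ /(_ s s_nz s_e) [l ql]] := Hq; exists (Some l).
Qed.

Lemma rees_decomposition s : s <> z -> exists oi g ol, He g /\ s = rep oi ⋆ g ⋆ lrep ol.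
Proof.
move=> s_nz.
have [oi r_s] := rep_class_cover s_nz; have [t s_rt] := (r_s s).2 (mulS_refl s_nz).
have [ol q_s] := lrep_class_cover s_nz; have [t' s_t'q] := (q_s s).2 (Smul_refl s_nz).
have [a a_r] := rep_linv oi; have [b q_b] := lrep_rinv ol.
have [_ re] := rep_spec oi; have [_ eq] := lrep_spec ol.
have ras : rep oi ⋆ a ⋆ s = s by rewrite {1}s_rt !mulA -(mulA (rep oi) a) a_r re -s_rt.
have sbq : s ⋆ b ⋆ lrep ol = s by rewrite {1}s_t'q -(mulA t') q_b -mulA eq -s_t'q.
have s_def : rep oi ⋆ (e ⋆ a ⋆ s ⋆ b ⋆ e) ⋆ lrep ol = s.
  by rewrite !mulA re ras -(mulA (s ⋆ b)) eq sbq.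
exists oi, (e ⋆ a ⋆ s ⋆ b ⋆ e), ol; split; last by rewrite s_def.
split; first by move=> g_z; apply: s_nz; rewrite -s_def g_z mul_z mulz.
by split; [rewrite !mulA ee | rewrite -mulA ee].
Qed.

Lemma rees_cancel oi g ol a b : He g -> a ⋆ rep oi = e -> lrep ol ⋆ b = e ->
  a ⋆ (rep oi ⋆ g ⋆ lrep ol) ⋆ b = g.
Proof. by move=> [_ [eg ge]] a_r q_b; rewrite !mulA a_r eg -(mulA g) q_b ge. Qed.

Lemma rees_nonzero oi g ol : He g -> rep oi ⋆ g ⋆ lrep ol <> z.
Proof.
move=> Hg s_z; have [a a_r] := rep_linv oi; have [b q_b] := lrep_rinv ol.
have := rees_cancel Hg a_r q_b; rewrite s_z mul_z mulz => z_g.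
by case: Hg; rewrite -z_g.
Qed.

Lemma rees_unique oi g ol oj h om : He g -> He h ->
  rep oi ⋆ g ⋆ lrep ol = rep oj ⋆ h ⋆ lrep om -> [/\ oi = oj, g = h & ol = om].
Proof.
move=> Hg Hh same.
have s_nz := @rees_nonzero oi g ol Hg; have s'_nz := @rees_nonzero oj h om Hh.
have in_rS o k p : mulS mul (rep o) (rep o ⋆ k ⋆ lrep p) by exists (k ⋆ lrep p); rewrite mulA.
have in_Sq o k p : Smul mul (lrep p) (rep o ⋆ k ⋆ lrep p) by exists (rep o ⋆ k).
have oi_oj : oi = oj.
  apply: rep_class_inj => x; rewrite (mulS_eq (proj1 (rep_spec oi)) s_nz (in_rS _ _ _)).
  by rewrite (mulS_eq (proj1 (rep_spec oj)) s'_nz (in_rS _ _ _)) same.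
have ol_om : ol = om.
  apply: lrep_class_inj => x; rewrite (Smul_eq (proj1 (lrep_spec ol)) s_nz (in_Sq _ _ _)).
  by rewrite (Smul_eq (proj1 (lrep_spec om)) s'_nz (in_Sq _ _ _)) same.
subst oj om; split=> //.
have [a a_r] := rep_linv oi; have [b q_b] := lrep_rinv ol.
by rewrite -(rees_cancel Hg a_r q_b) same (rees_cancel Hh a_r q_b).
Qed.

End ReesDecomposition.
End AtIdempotent.
End CompletelyZeroSimple.

Lemma exists_L_transversal (S : Type) (mul : S -> S -> S) (z e : S) :
  associative_op mul -> is_zero mul z -> completely_zero_simple mul z ->
  mul e e = e -> e <> z -> finitely_many_left_ideals mul ->
  exists (L : finType) (q : L -> S), L_transversal mul z e q.
Proof.
move=> mulA Hzero HS ee e_nz finL.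
exact: (exists_R_transversal (associative_op_opp mulA) (is_zero_opp Hzero)
          (completely_zero_simple_opp HS) ee e_nz finL).
Qed.

(** * The rewriting system *)

Lemma rstep_nonnil (X : finType) (R : rules X) u v :
  rules_ok R -> rstep R u v -> u <> [::] /\ v <> [::].
Proof.
move=> R_ok [w1 [w2 [l [r [lr [-> ->]]]]]]; have /andP [/= l_nz r_nz] := R_ok _ lr.
by split=> /(congr1 size); rewrite !size_cat /=; lia.
Qed.

Lemma rstep_cat (X : finType) (R : rules X) w1 w2 a b :
  rstep R a b -> rstep R (w1 ++ a ++ w2) (w1 ++ b ++ w2).
Proof.
move=> [p [s [l [r [lr [-> ->]]]]]].
by exists (w1 ++ p), (s ++ w2), l, r; rewrite !catA.
Qed.

Section WordSplitting.
Variable T : Type.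

Lemma map_eq_cat (U : Type) (f : U -> T) u x y : map f u = x ++ y ->
  exists x0 y0, [/\ u = x0 ++ y0, x = map f x0 & y = map f y0].
Proof.
elim: x u => [|c x IH] u /=; first by move=> <-; exists [::], u.
case: u => // a u [fa_c /IH [x0 [y0 [-> -> ->]]]].
by exists (a :: x0), y0; rewrite -fa_c.
Qed.

Lemma split_at_letter (P : pred T) (c : T) mu w1 w2 p s : P c -> ~~ has P mu ->
  p ++ mu ++ s = w1 ++ c :: w2 ->
  (exists p', p = w1 ++ c :: p' /\ w2 = p' ++ mu ++ s) \/
  (exists s', s = s' ++ c :: w2 /\ w1 = p ++ mu ++ s').
Proof.
move=> Pc P_mu; elim: p w1 => [|x p IH] w1 /=.
  elim: mu P_mu w1 => [|m mu IH] P_mu w1 /=; first by move=> ->; right; exists w1.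
  case: w1 => [|y w1] /= [m_y mu_s]; first by move: P_mu; rewrite /= m_y Pc.
  move: P_mu; rewrite negb_or => /andP [_ /IH /(_ w1 mu_s)].
  case=> [[p' [w1_nil _]]|[s' [-> ->]]]; first by case: w1 {mu_s} w1_nil.
  by right; exists s'; rewrite m_y.
case: w1 => [|y w1] /= [x_y rest]; first by left; exists p; rewrite x_y rest.
case: (IH _ rest) => [[p' [-> ->]]|[s' [-> ->]]].
  by left; exists p'; rewrite x_y.
by right; exists s'; rewrite x_y.
Qed.

End WordSplitting.

Section RewritingSystem.
Variables (S : Type) (mul : S -> S -> S) (z : S).
Hypotheses (mulA : associative_op mul) (Hzero : is_zero mul z).
Local Infix "⋆" := mul (at level 40, left associativity).
Let mulz x : z ⋆ x = z. Proof. exact: (Hzero x).1. Qed.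
Let mul_z x : x ⋆ z = z. Proof. exact: (Hzero x).2. Qed.

Variable e : S.
Hypotheses (ee : e ⋆ e = e) (e_nz : e <> z).
Local Notation He := (idem_group mul z e).

Variables (I L : finType) (r : I -> S) (q : L -> S).
Hypotheses (r_e : forall i, r i ⋆ e = r i) (e_q : forall l, e ⋆ q l = q l).
Local Notation rep := (oapp r e).
Local Notation lrep := (oapp q e).
Hypothesis decomposition :
  forall s, s <> z -> exists oi g ol, He g /\ s = rep oi ⋆ g ⋆ lrep ol.
Hypothesis decomposition_nonzero : forall oi g ol, He g -> rep oi ⋆ g ⋆ lrep ol <> z.
Hypothesis decomposition_unique : forall oi g ol oj h om, He g -> He h ->
  rep oi ⋆ g ⋆ lrep ol = rep oj ⋆ h ⋆ lrep om -> [/\ oi = oj, g = h & ol = om].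

Variables (A : finType) (RG : rules A) (fA : A -> S).
Hypotheses (RG_ok : rules_ok RG) (RG_complete : complete RG).
Hypothesis fA_in : forall x w, He (eval_word mul fA x w).
Hypothesis fA_onto : forall g, He g -> exists x w, eval_word mul fA x w = g.
Hypothesis fA_kernel : forall x w y w',
  eval_word mul fA x w = eval_word mul fA y w' <-> rcong RG (x :: w) (y :: w').
Local Notation evA := (oeval mul fA).
Local Notation stepG := (rstep RG).

Lemma group_letter a : He (fA a).
Proof. exact: (fA_in a [::]). Qed.

Lemma stepG_eval u v : stepG u v -> evA u = evA v.
Proof.
move=> uv; have [] := rstep_nonnil RG_ok uv.
case: u uv => // x w; case: v => // y w' uv _ _.
by congr Some; apply/fA_kernel; exact: rst_step.
Qed.

Lemma stepsG_eval u v : clos_refl_trans _ stepG u v -> evA u = evA v.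
Proof. by elim=> // [a b /stepG_eval|a b c _ -> _ ->]. Qed.

Lemma stepG_wf : well_founded (transp _ stepG).
Proof. exact: no_infinite_chain_wf RG_complete.1. Qed.

Lemma group_normal_form g : He g ->
  exists u, [/\ u <> [::], irreducible stepG u & evA u = Some g].
Proof.
move=> /fA_onto [x [w xw_g]].
have [u [xw_u irr_u]] := Acc_normal_form (stepG_wf (x :: w)).
have := stepsG_eval xw_u; rewrite /= xw_g => g_u.
by exists u; split=> //; move=> u_nil; rewrite u_nil in g_u.
Qed.

Lemma group_normal_form_unique u1 u2 : u1 <> [::] -> u2 <> [::] ->
  irreducible stepG u1 -> irreducible stepG u2 -> evA u1 = evA u2 -> u1 = u2.
Proof.
case: u1 => // x w _; case: u2 => // y w' _ irr1 irr2 [/fA_kernel same].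
have [c [c1 c2]] := church_rosser RG_complete.2 same.
by rewrite -(irreducible_rt_eq irr1 c1) -(irreducible_rt_eq irr2 c2).
Qed.

Definition word_e : seq A :=
  epsilon (inhabits [::]) (fun u => [/\ u <> [::], irreducible stepG u & evA u = Some e]).

Lemma word_e_spec : [/\ word_e <> [::], irreducible stepG word_e & evA word_e = Some e].
Proof.
have He_e : He e by split=> //; rewrite ee.
exact: (epsilon_spec (inhabits [::]) _ (group_normal_form He_e)).
Qed.

Definition letter : finType := (A + (I + (L + unit)))%type.
Definition cA (a : A) : letter := inl a.
Definition cR (i : I) : letter := inr (inl i).
Definition cQ (l : L) : letter := inr (inr (inl l)).
Definition cZ : letter := inr (inr (inr tt)).

Definition fX (x : letter) : S :=
  match x with
  | inl a => fA a
  | inr (inl i) => r i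
  | inr (inr (inl l)) => q l
  | inr (inr (inr _)) => z
  end.

Definition isA (x : letter) := if x is inl _ then true else false.
Definition isR (x : letter) := if x is inr (inl _) then true else false.
Definition isQ (x : letter) := if x is inr (inr (inl _)) then true else false.
Definition isZ (x : letter) := if x is inr (inr (inr _)) then true else false.
Definition isRQ (x : letter) := isR x || isQ x.

Local Notation evX := (oeval mul fX).

Lemma evX_lift u : evX (map cA u) = evA u.
Proof. by rewrite oeval_map. Qed.

Lemma count_RQ_lift u : count isRQ (map cA u) = 0.
Proof. by rewrite count_map; elim: u. Qed.

Lemma evX_cons x w : evX (x :: w) = omul mul (Some (fX x)) (evX w).
Proof. exact: (oeval_cat mulA fX [:: x] w). Qed.

Lemma evX_rcons w x : evX (w ++ [:: x]) = omul mul (evX w) (Some (fX x)).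
Proof. exact: (oeval_cat mulA fX w [:: x]). Qed.

(* Only specified on [He] and on [0] (see [eSe_word_spec]); junk elsewhere. *)
Definition eSe_word (s : S) : seq letter :=
  epsilon (inhabits [::]) (fun w => [/\ w <> [::], count isRQ w = 0 & evX w = Some s]).

Lemma eSe_word_spec a b : e ⋆ a = a -> b ⋆ e = b ->
  [/\ eSe_word (a ⋆ b) <> [::], count isRQ (eSe_word (a ⋆ b)) = 0 &
      evX (eSe_word (a ⋆ b)) = Some (a ⋆ b)].
Proof.
move=> ea be.
apply: (epsilon_spec (inhabits [::])
  (fun w => [/\ w <> [::], count isRQ w = 0 & evX w = Some (a ⋆ b)])).
case: (classic (a ⋆ b = z)) => [->|ab_nz]; first by exists [:: cZ].
have [|u [u_nz _ u_ab]] := @group_normal_form (a ⋆ b).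
  by split=> //; split; [rewrite mulA ea | rewrite -mulA be].
by exists (map cA u); rewrite count_RQ_lift evX_lift; split=> //; case: (u) u_nz.
Qed.

Inductive rule : seq letter * seq letter -> Prop :=
  | rule_group u v of (u, v) \in RG : rule (map cA u, map cA v)
  | rule_zero_l x : rule ([:: cZ; x], [:: cZ])
  | rule_zero_r x : rule ([:: x; cZ], [:: cZ])
  | rule_R_e i : rule (cR i :: map cA word_e, [:: cR i])
  | rule_e_Q l : rule (map cA word_e ++ [:: cQ l], [:: cQ l])
  | rule_A_R a i : rule ([:: cA a; cR i], cA a :: eSe_word (e ⋆ r i))
  | rule_R_R j i : rule ([:: cR j; cR i], cR j :: eSe_word (e ⋆ r i))
  | rule_Q_R l i : rule ([:: cQ l; cR i], eSe_word (q l ⋆ r i))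
  | rule_Q_A l a : rule ([:: cQ l; cA a], eSe_word (q l ⋆ e) ++ [:: cA a])
  | rule_Q_Q l m : rule ([:: cQ l; cQ m], eSe_word (q l ⋆ e) ++ [:: cQ m]).

Definition RX : rules letter :=
  [seq (map cA p.1, map cA p.2) | p <- RG] ++
  [seq ([:: cZ; x], [:: cZ]) | x <- enum letter] ++
  [seq ([:: x; cZ], [:: cZ]) | x <- enum letter] ++
  [seq (cR i :: map cA word_e, [:: cR i]) | i <- enum I] ++
  [seq (map cA word_e ++ [:: cQ l], [:: cQ l]) | l <- enum L] ++
  [seq ([:: cA p.1; cR p.2], cA p.1 :: eSe_word (e ⋆ r p.2)) | p <- enum {: A * I}] ++
  [seq ([:: cR p.1; cR p.2], cR p.1 :: eSe_word (e ⋆ r p.2)) | p <- enum {: I * I}] ++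
  [seq ([:: cQ p.1; cR p.2], eSe_word (q p.1 ⋆ r p.2)) | p <- enum {: L * I}] ++
  [seq ([:: cQ p.1; cA p.2], eSe_word (q p.1 ⋆ e) ++ [:: cA p.2]) | p <- enum {: L * A}] ++
  [seq ([:: cQ p.1; cQ p.2], eSe_word (q p.1 ⋆ e) ++ [:: cQ p.2]) | p <- enum {: L * L}].

Lemma RX_rule p : p \in RX -> rule p.
Proof.
rewrite !mem_cat; do ! case/orP; move=> /mapP [x x_in ->]; try constructor.
by case: x x_in.
Qed.

Lemma rule_RX p : rule p -> p \in RX.
Proof.
have fam (T : finType) (F : T -> seq letter * seq letter) t : F t \in map F (enum T).
  by rewrite map_f ?mem_enum.
case=> [u v uv|x|x|i|l|a i|j i|l i|l a|l m]; rewrite !mem_cat.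
- by rewrite (map_f (fun p : seq A * seq A => (map cA p.1, map cA p.2)) uv).
- by rewrite (fam _ _ x) orbT.
- by rewrite (fam _ _ x) !orbT.
- by rewrite (fam _ _ i) !orbT.
- by rewrite (fam _ _ l) !orbT.
- by rewrite (fam _ _ (a, i)) !orbT.
- by rewrite (fam _ _ (j, i)) !orbT.
- by rewrite (fam _ _ (l, i)) !orbT.
- by rewrite (fam _ _ (l, a)) !orbT.
- by rewrite (fam _ _ (l, m)) !orbT.
Qed.

Lemma rule_lhs_nonnil p : rule p -> p.1 <> [::].
Proof.
case=> //= [u v /RG_ok /andP [/= u_nz _]|l]; first by case: u u_nz.
by case: (map cA word_e).
Qed.

Lemma rule_eval p : rule p -> evX p.1 = evX p.2.
Proof.
have [_ _ we_e] := word_e_spec.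
have fA_e a : fA a ⋆ e = fA a /\ e ⋆ fA a = fA a by have [_ []] := group_letter a.
case=> [u v uv|x|x|i|l|a i|j i|l i|l a|l m].
- by rewrite !evX_lift; apply: stepG_eval; exists [::], [::], u, v; rewrite !cats0.
- by rewrite /= /eval_word /= mulz.
- by rewrite /= /eval_word /= mul_z.
- by rewrite evX_cons evX_lift we_e /= r_e.
- by rewrite evX_rcons evX_lift we_e /= e_q.
- have [_ _ w_eval] := eSe_word_spec ee (r_e i).
  by rewrite !evX_cons w_eval /= mulA (fA_e a).1.
- have [_ _ w_eval] := eSe_word_spec ee (r_e i).
  by rewrite !evX_cons w_eval /= mulA r_e.
- by have [_ _ ->] := eSe_word_spec (e_q l) (r_e i).
- have [_ _ w_eval] := eSe_word_spec (e_q l) ee.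
  by rewrite evX_rcons w_eval /= -mulA (fA_e a).2.
- have [_ _ w_eval] := eSe_word_spec (e_q l) ee.
  by rewrite evX_rcons w_eval /= -mulA e_q.
Qed.

Lemma RX_ok : rules_ok RX.
Proof.
move=> p /RX_rule p_rule; have lhs_nz := rule_lhs_nonnil p_rule.
have rhs_nz : p.2 <> [::].
  by move=> rhs_nil; apply/lhs_nz/(oeval_eq_None mul fX); rewrite (rule_eval p_rule) rhs_nil.
by rewrite !lt0n !size_eq0; apply/andP; split; apply/eqP.
Qed.

Local Notation stepX := (rstep RX).

Lemma rule_redex w1 u v w2 : rule (u, v) -> stepX (w1 ++ u ++ w2) (w1 ++ v ++ w2).
Proof. by move=> /rule_RX uv; exists w1, w2, u, v. Qed.

Lemma stepX_eval a b : stepX a b -> evX a = evX b.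
Proof.
move=> [w1 [w2 [u [v [/RX_rule uv [-> ->]]]]]].
exact: (oeval_congr mulA w1 w2 (rule_eval uv)).
Qed.

Lemma stepsX_eval a b : rsteps RX a b -> evX a = evX b.
Proof. by elim=> // [a' b' /stepX_eval|a' b' c' _ -> _ ->]. Qed.

Lemma rcongX_eval a b : rcong RX a b -> evX a = evX b.
Proof. by elim=> [a' b' /stepX_eval|//|a' b' _ ->|a' b' c' _ -> _ ->]. Qed.

Definition in_context (B : seq letter -> seq letter -> Prop) (a b : seq letter) :=
  exists w1 w2 x y, [/\ B x y, a = w1 ++ x ++ w2 & b = w1 ++ y ++ w2].

Definition group_redex (x y : seq letter) :=
  exists u v, [/\ (u, v) \in RG, x = map cA u & y = map cA v].

Definition erase_redex (x y : seq letter) := exists c d,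
  [/\ ~~ isA c, d != [::], count isRQ d = 0, y = [:: c] & x = c :: d \/ x = d ++ [:: c]].

Local Notation group_step := (in_context group_redex).
Local Notation erase_step := (in_context erase_redex).

Lemma rule_shape p : rule p ->
  [\/ group_redex p.1 p.2, erase_redex p.1 p.2 | count isRQ p.2 < count isRQ p.1].
Proof.
have [we_nz _ _] := word_e_spec.
have cA_we_nz : map cA word_e != [::] by case: (word_e) we_nz.
case=> [u v uv|x|x|i|l|a i|j i|l i|l a|l m].
- by apply: Or31; exists u, v.
- case x_RQ: (isRQ x); first by apply: Or33; rewrite /= x_RQ.
  by apply: Or32; exists cZ, [:: x]; split=> //=; [rewrite x_RQ | left].
- case x_RQ: (isRQ x); first by apply: Or33; rewrite /= x_RQ.
  by apply: Or32; exists cZ, [:: x]; split=> //=; [rewrite x_RQ | right].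
- apply: Or32; exists (cR i), (map cA word_e).
  by split=> //; [exact: count_RQ_lift | left].
- apply: Or32; exists (cQ l), (map cA word_e).
  by split=> //; [exact: count_RQ_lift | right].
- by have [_ w0 _] := eSe_word_spec ee (r_e i); apply: Or33; rewrite /= w0.
- by have [_ w0 _] := eSe_word_spec ee (r_e i); apply: Or33; rewrite /= w0.
- by have [_ w0 _] := eSe_word_spec (e_q l) (r_e i); apply: Or33; rewrite w0.
- by have [_ w0 _] := eSe_word_spec (e_q l) ee; apply: Or33; rewrite count_cat w0.
- by have [_ w0 _] := eSe_word_spec (e_q l) ee; apply: Or33; rewrite count_cat w0.
Qed.

Lemma group_redex_count x y : group_redex x y -> count isRQ y = count isRQ x.
Proof. by move=> [u [v [_ -> ->]]]; rewrite !count_RQ_lift. Qed.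

Lemma erase_redex_count x y :
  erase_redex x y -> count isRQ y = count isRQ x /\ size y < size x.
Proof.
move=> [c [d [_ d_nil d_RQ -> x_def]]]; have d_pos : 0 < size d by rewrite lt0n size_eq0.
by case: x_def => ->; rewrite /= ?count_cat ?size_cat /= d_RQ ?addn1 ?add0n; split.
Qed.

Lemma stepX_cases a b : stepX a b ->
  count isRQ b < count isRQ a \/
  union _ group_step erase_step a b /\ count isRQ b <= count isRQ a.
Proof.
move=> [w1 [w2 [u [v [/RX_rule /rule_shape uv [-> ->]]]]]]; rewrite !count_cat.
case: uv => [uv|uv|lt_uv]; last by left; rewrite ltn_add2l ltn_add2r.
- right; rewrite (group_redex_count uv).
  by split=> //; left; exists w1, w2, u, v.
- right; rewrite (erase_redex_count uv).1.
  by split=> //; right; exists w1, w2, u, v.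
Qed.

Lemma lift_all_A u : ~~ has (fun x => ~~ isA x) (map cA u).
Proof. by elim: u. Qed.

(* The erased letter [c] is not in [A], so the group redex lies entirely to its
   left or entirely to its right. *)
Lemma erase_group_postpone a b c : erase_step a b -> group_step b c ->
  exists2 a', group_step a a' & clos_refl_trans _ erase_step a' c.
Proof.
move=> [w1 [w2 [x [y [xy -> ->]]]]] [p [s [X [Y [XY b_def ->]]]]].
have [c0 [_ [c0_A _ _ y_c0 _]]] := xy; have [u [v [uv X_u Y_v]]] := XY.
suff [a' ga' ea'] : exists2 a', group_step (w1 ++ x ++ w2) a' & erase_step a' (p ++ Y ++ s).
  by exists a'; [|exact: rt_step].
move: b_def; rewrite y_c0 X_u => /esym.
move/(split_at_letter (P := fun x => ~~ isA x) c0_A (lift_all_A u)).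
case=> [[p' [-> ->]]|[s' [-> ->]]].
- exists (w1 ++ x ++ p' ++ Y ++ s).
    by exists (w1 ++ x ++ p'), s, X, Y; split=> //; rewrite ?X_u -!catA.
  by exists w1, (p' ++ Y ++ s), x, y; split=> //; rewrite ?y_c0 -!catA.
- exists (p ++ Y ++ s' ++ x ++ w2).
    by exists p, (s' ++ x ++ w2), X, Y; split=> //; rewrite ?X_u -!catA.
  by exists (p ++ Y ++ s'), w2, x, y; split=> //; rewrite ?y_c0 -!catA.
Qed.

Lemma group_step_lift_Acc u : Acc (transp _ group_step) (map cA u).
Proof.
have cA_inj : injective cA by move=> a b [].
elim: (stepG_wf u) => {}u _ IH.
constructor=> b [w1 [w2 [x [y [[u1 [v1 [uv -> ->]]] u_def ->]]]]].
have [x0 [y0 [u_xy w1_x /esym y_def]]] := map_eq_cat u_def.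
have [x1 [y1 [y_xy /(inj_map cA_inj) x1_u1 w2_y]]] := map_eq_cat y_def.
subst; rewrite -!map_cat; apply: IH.
by exists x0, y1, x1, v1.
Qed.

Lemma group_step_cat_Acc c x rest : ~~ isA c ->
  Acc (transp _ group_step) x -> Acc (transp _ group_step) rest ->
  Acc (transp _ group_step) (x ++ c :: rest).
Proof.
move=> c_A acc_x; elim: acc_x rest => {}x _ IHx rest; elim=> {}rest acc_rest IHr.
constructor=> b [p [s [X [Y [XY xr_def ->]]]]]; have [u [v [_ X_u _]]] := XY.
move: xr_def; rewrite X_u => /esym /(split_at_letter (P := fun x => ~~ isA x) c_A (lift_all_A u)).
case=> [[p' [-> rest_def]]|[s' [-> x_def]]].
  by rewrite -catA /=; apply: IHr; exists p', s, X, Y; split=> //; rewrite ?X_u.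
have -> : p ++ Y ++ s' ++ c :: rest = (p ++ Y ++ s') ++ c :: rest by rewrite -!catA.
by apply: IHx; [exists p, s', X, Y; split=> //; rewrite ?X_u | exact: Acc_intro].
Qed.

Lemma group_step_wf : well_founded (transp _ group_step).
Proof.
suff acc u rest : Acc (transp _ group_step) (map cA u ++ rest) by move=> w; exact: acc [::] w.
elim: rest u => [|c rest IH] u; first by rewrite cats0; exact: group_step_lift_Acc.
case: c => [a|c].
  have -> : map cA u ++ inl a :: rest = map cA (rcons u a) ++ rest.
    by rewrite map_rcons cat_rcons.
  exact: IH.
exact: group_step_cat_Acc (group_step_lift_Acc u) (IH [::]).
Qed.

Lemma erase_step_wf : well_founded (transp _ erase_step).
Proof.
apply: (@wf_measure _ _ size) => _ _ [w1 [w2 [x [y [/erase_redex_count [_ lt_yx] -> ->]]]]].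
by rewrite !size_cat ltn_add2l ltn_add2r.
Qed.

Lemma stepX_wf : well_founded (transp _ stepX).
Proof.
apply: (wf_measure_lex (f := count isRQ) (P := union _ group_step erase_step)).
  exact: wf_union_postpone group_step_wf erase_step_wf erase_group_postpone.
exact: stepX_cases.
Qed.

Lemma RX_noetherian : noetherian RX.
Proof. exact: wf_no_infinite_chain stepX_wf. Qed.

Definition optR (oi : option I) : seq letter := if oi is Some i then [:: cR i] else [::].
Definition optQ (ol : option L) : seq letter := if ol is Some l then [:: cQ l] else [::].

Definition normal_form (w : seq letter) :=
  w = [:: cZ] \/ exists oi u ol, w = optR oi ++ map cA u ++ optQ ol /\
    [/\ u = [::] -> oi <> None \/ ol <> None,
        oi <> None \/ ol <> None -> u <> word_e & irreducible stepG u].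

Definition adjacent_ok (x y : letter) := [&& ~~ isR y, ~~ isQ x, ~~ isZ x & ~~ isZ y].

Lemma nonadjacent_redex x y : ~~ adjacent_ok x y -> exists v, rule ([:: x; y], v).
Proof.
by case: x => [a|[i|[l|[]]]]; case: y => [b|[j|[m|[]]]] //= _; eexists; constructor.
Qed.

Lemma irreducible_sorted w : irreducible stepX w -> sorted adjacent_ok w.
Proof.
elim: w => [|x w IH] //; case: w IH => [|y w] //= IH irr; apply/andP; split.
  apply: contraT => /nonadjacent_redex [v xy_v]; case: (irr (v ++ w)).
  exact: (rule_redex [::] w xy_v).
apply: IH => w' step; apply: (irr (x :: w')).
by have := rstep_cat [:: x] [::] step; rewrite !cats0.
Qed.

Lemma sorted_tail_shape c w : path adjacent_ok c w -> w <> [::] ->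
  exists u ol, w = map cA u ++ optQ ol.
Proof.
elim: w c => //= y w IH c /andP [/and4P [y_R _ _ y_Z] y_w] _.
case: w IH y_w => [|y' w] IH y_w.
  case: y y_R y_Z {y_w IH} => [a|[i|[l|[]]]] // _ _.
    by exists [:: a], None.
  by exists [::], (Some l).
have [u [ol ->]] := IH y y_w ltac:(by []).
have /andP [/and4P [_ y_Q y_Z' _] _] := y_w.
case: y y_R y_Q y_Z' {y_Z y_w IH} => [a|[i|[l|[]]]] // _ _ _.
by exists (a :: u), ol.
Qed.

Lemma sorted_shape w : sorted adjacent_ok w -> w <> [::] ->
  w = [:: cZ] \/ exists oi u ol, w = optR oi ++ map cA u ++ optQ ol.
Proof.
case: w => // c w /= c_w _; case: w c_w => [|y w] c_w.
  case: c {c_w} => [a|[i|[l|[]]]]; last by left.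
  - by right; exists None, [:: a], None.
  - by right; exists (Some i), [::], None.
  - by right; exists None, [::], (Some l).
have [u [ol ->]] := sorted_tail_shape c_w ltac:(by []).
have /andP [/and4P [_ c_Q c_Z _] _] := c_w.
case: c c_Q c_Z {c_w} => [a|[i|[l|[]]]] // _ _.
  by right; exists None, (a :: u), ol.
by right; exists (Some i), u, ol.
Qed.

Lemma irreducible_normal_form w : w <> [::] -> irreducible stepX w -> normal_form w.
Proof.
move=> w_nz irr; case: (sorted_shape (irreducible_sorted irr) w_nz) => [->|[oi [u [ol w_def]]]].
  by left.
subst w; right; exists oi, u, ol; split=> //; split.
- move=> u_nil; subst u; case: oi w_nz {irr} => [i|] w_nz; first by left.
  by case: ol w_nz => [l|] w_nz; [right | case: w_nz].
- move=> oi_ol u_we; subst u; clear w_nz.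
  case: oi oi_ol irr => [i|] oi_ol irr.
    by apply: (irr ([:: cR i] ++ optQ ol)); exact: (rule_redex [::] (optQ ol) (rule_R_e i)).
  case: ol oi_ol irr => [l|] [] // _ irr.
  by apply: (irr [:: cQ l]); have := rule_redex [::] [::] (rule_e_Q l); rewrite !cats0.
- move=> u' step; apply: (irr (optR oi ++ map cA u' ++ optQ ol)).
  case: step => [p [s [x [y [xy [-> ->]]]]]].
  have := rule_redex (optR oi ++ map cA p) (map cA s ++ optQ ol) (rule_group xy).
  by rewrite !map_cat -!catA.
Qed.

Lemma evX_decorated oi ol w s : evX w = Some s -> e ⋆ s = s -> s ⋆ e = s ->
  evX (optR oi ++ w ++ optQ ol) = Some (rep oi ⋆ s ⋆ lrep ol).
Proof.
move=> w_s es se; rewrite !(oeval_cat mulA) w_s.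
case: oi => [i|]; case: ol => [l|] /=.
- by rewrite mulA.
- by rewrite -mulA se.
- by rewrite es.
- by rewrite es se.
Qed.

Lemma evX_decorated_nil oi ol : oi <> None \/ ol <> None ->
  evX (optR oi ++ optQ ol) = Some (rep oi ⋆ e ⋆ lrep ol).
Proof.
rewrite (oeval_cat mulA); case: oi => [i|]; case: ol => [l|] /= oi_ol.
- by rewrite r_e.
- by rewrite !r_e.
- by rewrite ee e_q.
- by case: oi_ol.
Qed.

Lemma normal_form_value oi u ol : (u = [::] -> oi <> None \/ ol <> None) ->
  exists g, [/\ He g, evX (optR oi ++ map cA u ++ optQ ol) = Some (rep oi ⋆ g ⋆ lrep ol),
                 u = [::] -> g = e & u <> [::] -> evA u = Some g].
Proof.
case: u => [|x w] oi_ol.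
  have He_e : He e by split=> //; rewrite ee.
  by exists e; split=> //; exact: evX_decorated_nil (oi_ol erefl).
have [_ [eg ge]] := fA_in x w.
exists (eval_word mul fA x w); split=> //.
by apply: evX_decorated; rewrite ?evX_lift.
Qed.

Lemma normal_form_unique n1 n2 :
  normal_form n1 -> normal_form n2 -> evX n1 = evX n2 -> n1 = n2.
Proof.
have [we_nz we_irr we_e] := word_e_spec.
have value_nz oi u ol : (u = [::] -> oi <> None \/ ol <> None) ->
    evX (optR oi ++ map cA u ++ optQ ol) <> Some z.
  by move=> /normal_form_value [g [Hg -> _ _]] [/(decomposition_nonzero Hg)].
case=> [->|[oi [u [ol [-> [nil1 we1 irr1]]]]]];
  case=> [->|[oj [u' [om [-> [nil2 we2 irr2]]]]]] // same.
- by case: (value_nz _ _ _ nil2); rewrite -same.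
- by case: (value_nz _ _ _ nil1); rewrite same.
have [g [Hg v1 g1 g2]] := normal_form_value nil1; have [h [Hh v2 h1 h2]] := normal_form_value nil2.
move: same; rewrite v1 v2 => -[/(decomposition_unique Hg Hh) [oi_oj g_h ol_om]]; subst oj h om.
have is_word_e v : v <> [::] -> irreducible stepG v -> evA v = Some e -> v = word_e.
  by move=> v_nz v_irr v_e; apply: group_normal_form_unique => //; rewrite v_e we_e.
congr (_ ++ _ ++ _); congr map.
have [u_nil|/eqP u_nz] := eqVneq u [::]; have [u'_nil|/eqP u'_nz] := eqVneq u' [::].
- by rewrite u_nil u'_nil.
- by case: (we2 (nil1 u_nil)); apply: is_word_e => //; rewrite h2 // g1.
- by case: (we1 (nil2 u'_nil)); apply: is_word_e => //; rewrite g2 // h1.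
- by apply: group_normal_form_unique => //; rewrite g2 // h2.
Qed.

Lemma exists_normal_form w : w <> [::] -> exists2 n, rsteps RX w n & normal_form n.
Proof.
move=> w_nz; have [n [wn irr_n]] := Acc_normal_form (stepX_wf w).
exists n => //; apply: irreducible_normal_form irr_n => n_nil.
by apply/w_nz/(oeval_eq_None mul fX); rewrite (stepsX_eval wn) n_nil.
Qed.

Lemma RX_confluent : confluent RX.
Proof.
move=> u v v' uv uv'.
have v_v' : evX v = evX v' by rewrite -(stepsX_eval uv) (stepsX_eval uv').
have [v_nil|/eqP v_nz] := eqVneq v [::].
  have v'_nil : v' = [::] by apply/(oeval_eq_None mul fX); rewrite -v_v' v_nil.
  by exists [::]; rewrite v_nil v'_nil; split; exact: rt_refl.
have v'_nz : v' <> [::].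
  by move=> v'_nil; apply/v_nz/(oeval_eq_None mul fX); rewrite v_v' v'_nil.
have [n vn n_nf] := exists_normal_form v_nz; have [n' v'n' n'_nf] := exists_normal_form v'_nz.
have n_n' : n = n'.
  by apply: normal_form_unique => //; rewrite -(stepsX_eval vn) -(stepsX_eval v'n').
by exists n; split; rewrite // n_n'.
Qed.

Lemma RX_defines : defined_by mul full_set RX.
Proof.
exists fX; split=> //; split.
  move=> s _; case: (classic (s = z)) => [->|s_nz]; first by exists cZ, [::].
  have [oi [g [ol [Hg ->]]]] := decomposition s_nz.
  have [u [_ _ u_g]] := group_normal_form Hg; have [_ [eg ge]] := Hg.
  have := evX_decorated oi ol (w := map cA u) (s := g); rewrite evX_lift => /(_ u_g eg ge).
  by case: (optR oi ++ map cA u ++ optQ ol) => [|x w] //= [<-]; exists x, w.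
move=> x w y w'; split=> [same|/rcongX_eval [] //].
have [n xwn n_nf] := exists_normal_form (w := x :: w) ltac:(by []).
have [n' ywn' n'_nf] := exists_normal_form (w := y :: w') ltac:(by []).
have n_n' : n = n'.
  by apply: normal_form_unique => //; rewrite -(stepsX_eval xwn) -(stepsX_eval ywn') /= same.
subst n'; apply: rst_trans (clos_rt_clos_rst _ _ _ _ xwn) _.
exact/rst_sym/clos_rt_clos_rst.
Qed.

Lemma rees_fcrs_defined : fcrs_defined mul full_set.
Proof.
exists letter, RX; split; first exact: RX_ok.
by split; [split; [exact: RX_noetherian | exact: RX_confluent] | exact: RX_defines].
Qed.

End RewritingSystem.

Theorem theorem1p3 (S : Type) (mul : S -> S -> S) (z : S)
  (Hassoc : associative_op mul) (Hzero : is_zero mul z)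
  (HS : completely_zero_simple mul z)
  (HL : finitely_many_left_ideals mul) (HR : finitely_many_right_ideals mul)
  (HG : forall H, is_maximal_subgroup mul H -> fcrs_defined mul H) :
  fcrs_defined mul full_set.
Proof.
have [e [ee e_nz]] := exists_idempotent Hassoc Hzero HS.
have [I [r Hr]] := exists_R_transversal Hassoc Hzero HS ee e_nz HR.
have [L [q Hq]] := exists_L_transversal Hassoc Hzero HS ee e_nz HL.
have [A [RG [RG_ok [RG_complete [fA [fA_in [fA_onto fA_kernel]]]]]]] :=
  HG _ (idem_group_maximal Hassoc Hzero HS ee e_nz).
apply: (rees_fcrs_defined Hassoc Hzero ee e_nz (r := r) (q := q) _ _ _ _ _
          RG_ok RG_complete fA_in fA_onto fA_kernel).
- by move=> i; have [/(_ i) [_ []]] := Hr.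
- by move=> l; have [/(_ l) [_ []]] := Hq.
- exact: (rees_decomposition Hassoc Hzero HS ee e_nz Hr Hq).
- exact: (rees_nonzero Hassoc Hzero HS ee e_nz Hr Hq).
- exact: (rees_unique Hassoc Hzero HS ee e_nz Hr Hq).
Qed.
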